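(* Fix $\gamma\in\mathbb{R}$ and $\alpha\in\mathbb{R}$, and set $\beta=\alpha$. Let $\bm{u}_\gamma=(\sin\gamma,0,\cos\gamma)$ and $\hat{\bm z}=(0,0,1)$. For a unit vector $\bm u$ and angle $\theta$ let $\bm q(\bm u,\theta)=\{\cos(\theta/2),\ \sin(\theta/2)\,\bm u\}$ denote the unit quaternion representing rotation by $\theta$ about $\bm u$, and define the quaternions (Hamilton product) \[ \bm Q^{(1)}=\bm q(\bm u_\gamma,\beta)\,\bm q(\hat{\bm z},\alpha),\qquad \bm Q^{(4)}=\bm q(\bm u_\gamma,\beta+\pi)\,\bm q(\hat{\bm z},\alpha+\pi), \] (representing the rotations $R_1=R^{\bm u_\gamma}_\beta R^z_\alpha$ and $R_4=R^{\bm u_\gamma}_{\beta+\pi}R^z_{\alpha+\pi}$). For an integer $j\ge 1$ let $\bm q^{(j)}=(\bm Q^{(1)})^j\bm Q^{(4)}=\{q^{(j)}_1,q^{(j)}_2,q^{(j)}_3,q^{(j)}_4\}$ and define $\theta_{41^j}(\alpha,\gamma)=2\arccos q^{(j)}_1$. Then for every $j\ge 1$, if \[ \cos\left(\frac{\gamma}{2}\right)\sin\left(\frac{\alpha}{2}\right)=\sin\left(\frac{\pi}{2(2j+1)}\right)=\cos\left(\frac{j\pi}{2j+1}\right), \] then $\theta_{41^j}(\alpha,\gamma)=\dfrac{2j\pi}{2j+1}$.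
   Context: Setting: a piecewise isometry on the lower unit hemispherical shell obtained by rotating by $\alpha$ about the horizontal $z$-axis and then by $\beta$ about a second horizontal axis $\bm u_\gamma$ making angle $\gamma$ with the first, with points crossing the equator rotated by an extra $\pi$. On atom $P_1$ the map acts as the rotation $R_1$ and on atom $P_4$ as $R_4$; the itinerary $41^j$ (one visit to $P_4$ followed by $j$ visits to $P_1$) produces the net rotation $R_1^j R_4$ (rightmost applied first), whose quaternion is $\bm q^{(j)}$, and $\theta_{41^j}$ is the corresponding internal rotation angle of the cell with that itinerary. $R^{\bm a}_\theta$ denotes rotation by $\theta$ about axis $\bm a$. *)

From Stdlib Require Import Reals.
Open Scope R_scope.

(* Quaternion {w, (x,y,z)} = w + x i + y j + z k. *)
Record quat : Type := Quat { qw : R; qx : R; qy : R; qz : R }.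

Definition qmul (p q : quat) : quat :=
  Quat (qw p * qw q - qx p * qx q - qy p * qy q - qz p * qz q)
       (qw p * qx q + qx p * qw q + qy p * qz q - qz p * qy q)
       (qw p * qy q - qx p * qz q + qy p * qw q + qz p * qx q)
       (qw p * qz q + qx p * qy q - qy p * qx q + qz p * qw q).

Definition qone : quat := Quat 1 0 0 0.

Fixpoint qpow (q : quat) (n : nat) : quat :=
  match n with O => qone | S m => qmul q (qpow q m) end.

Definition qrot (u1 u2 u3 theta : R) : quat :=
  Quat (cos (theta / 2)) (sin (theta / 2) * u1)
       (sin (theta / 2) * u2) (sin (theta / 2) * u3).

Definition q_ugamma (gamma theta : R) : quat := qrot (sin gamma) 0 (cos gamma) theta.
Definition q_z (theta : R) : quat := qrot 0 0 1 theta.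

Definition Q1 (alpha gamma : R) : quat :=
  qmul (q_ugamma gamma alpha) (q_z alpha).
Definition Q4 (alpha gamma : R) : quat :=
  qmul (q_ugamma gamma (alpha + PI)) (q_z (alpha + PI)).

Definition qj (alpha gamma : R) (j : nat) : quat :=
  qmul (qpow (Q1 alpha gamma) j) (Q4 alpha gamma).

Definition theta41j (alpha gamma : R) (j : nat) : R :=
  2 * acos (qw (qj alpha gamma j)).

(* Write Q^(i) = w_i + v_i (scalar + vector part). Q^(1) is a unit quaternion with
   w_1 = 1 - 2 (cos(γ/2) sin(α/2))^2, which the hypothesis makes cos φ, φ = π/(2j+1);
   by de Moivre (Q^(1))^j = cos(jφ) + (sin(jφ)/sin φ) v_1, so the scalar part of
   (Q^(1))^j Q^(4) is cos(jφ) w_4 - (sin(jφ)/sin φ) (v_1·v_4). The identity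
   v_1·v_4 = (1 - w_1)(w_4 - 1), valid for all α, γ, and sin(jφ)(1 - cos φ) = cos(jφ) sin φ
   (from (j+1)φ = π - jφ) collapse this to cos(jφ); finally 0 <= jφ <= π. *)

From Stdlib Require Import Reals Lra.
Open Scope R_scope.

Definition qvdot (p q : quat) : R := qx p * qx q + qy p * qy q + qz p * qz q.

Definition qnorm2 (q : quat) : R := qw q ^ 2 + qvdot q q.

Lemma qnorm2_qmul (p q : quat) : qnorm2 (qmul p q) = qnorm2 p * qnorm2 q.
Proof. unfold qnorm2, qvdot, qmul; simpl; ring. Qed.

Lemma qnorm2_qrot (u1 u2 u3 theta : R) :
  u1 ^ 2 + u2 ^ 2 + u3 ^ 2 = 1 -> qnorm2 (qrot u1 u2 u3 theta) = 1.
Proof.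
  intros Hu; unfold qnorm2, qvdot, qrot; simpl.
  pose proof (sin2_cos2 (theta / 2)) as Hsc; unfold Rsqr in Hsc.
  transitivity (cos (theta / 2) ^ 2 + sin (theta / 2) ^ 2 * (u1 ^ 2 + u2 ^ 2 + u3 ^ 2));
    [ring | rewrite Hu; lra].
Qed.

Lemma qpow_cos_sin (q : quat) (phi : R) :
  qnorm2 q = 1 -> qw q = cos phi -> sin phi <> 0 ->
  forall k : nat, qpow q k =
    Quat (cos (INR k * phi)) (sin (INR k * phi) / sin phi * qx q)
         (sin (INR k * phi) / sin phi * qy q) (sin (INR k * phi) / sin phi * qz q).
Proof.
  intros Hn Hw Hs k.
  assert (Hv : qvdot q q = sin phi ^ 2).
  { pose proof (sin2_cos2 phi) as Hsc; unfold qnorm2, Rsqr in *.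
    rewrite Hw in Hn; lra. }
  induction k as [|k IH].
  - simpl; rewrite Rmult_0_l, cos_0, sin_0; unfold qone; f_equal; field; exact Hs.
  - simpl qpow; rewrite IH, S_INR.
    replace ((INR k + 1) * phi) with (INR k * phi + phi) by ring.
    rewrite cos_plus, sin_plus.
    destruct q as [w x y z]; simpl in Hw, Hv |- *; subst w; unfold qvdot in Hv; simpl in Hv.
    unfold qmul; simpl; f_equal.
    + transitivity (cos phi * cos (INR k * phi)
                    - sin (INR k * phi) / sin phi * (x * x + y * y + z * z));
        [ring | rewrite Hv; field; exact Hs].
    + field; exact Hs.
    + field; exact Hs.
    + field; exact Hs.
Qed.

Lemma qw_qpow_qmul (q p : quat) (phi : R) (k : nat) :
  qnorm2 q = 1 -> qw q = cos phi -> sin phi <> 0 ->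
  qw (qmul (qpow q k) p) =
    cos (INR k * phi) * qw p - sin (INR k * phi) / sin phi * qvdot q p.
Proof.
  intros Hn Hw Hs; rewrite (qpow_cos_sin q phi Hn Hw Hs k).
  unfold qmul, qvdot; simpl; ring.
Qed.

Lemma qnorm2_Q1 (alpha gamma : R) : qnorm2 (Q1 alpha gamma) = 1.
Proof.
  unfold Q1, q_ugamma, q_z.
  pose proof (sin2_cos2 gamma) as Hg; unfold Rsqr in Hg.
  rewrite qnorm2_qmul, !qnorm2_qrot; lra.
Qed.

Lemma qw_Q1 (alpha gamma : R) :
  qw (Q1 alpha gamma) = 1 - 2 * (cos (gamma / 2) * sin (alpha / 2)) ^ 2.
Proof.
  unfold Q1, q_ugamma, q_z, qrot, qmul; simpl.
  assert (Hg : cos gamma = 2 * cos (gamma / 2) * cos (gamma / 2) - 1).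
  { rewrite <- cos_2a_cos; f_equal; field. }
  rewrite Hg.
  pose proof (sin2_cos2 (alpha / 2)) as Ha; unfold Rsqr in Ha.
  nra.
Qed.

Lemma qrot_add_PI (u1 u2 u3 theta : R) :
  qrot u1 u2 u3 (theta + PI) =
    Quat (- sin (theta / 2)) (cos (theta / 2) * u1)
         (cos (theta / 2) * u2) (cos (theta / 2) * u3).
Proof.
  unfold qrot; replace ((theta + PI) / 2) with (theta / 2 + PI / 2) by field.
  rewrite cos_plus, sin_plus, cos_PI2, sin_PI2; f_equal; ring.
Qed.

Lemma qvdot_Q1_Q4 (alpha gamma : R) :
  qvdot (Q1 alpha gamma) (Q4 alpha gamma) =
    (1 - qw (Q1 alpha gamma)) * (qw (Q4 alpha gamma) - 1).
Proof.
  unfold Q4, q_ugamma, q_z; rewrite !qrot_add_PI.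
  unfold qvdot, Q1, q_ugamma, q_z, qrot, qmul; simpl.
  set (s := sin (alpha / 2)); set (c := cos (alpha / 2)).
  pose proof (sin2_cos2 (alpha / 2)) as Ha; unfold Rsqr in Ha; fold s c in Ha.
  transitivity (s * s * (1 + cos gamma) * (- (c * c) * (1 + cos gamma))); [ring |].
  apply f_equal2; lra.
Qed.

Lemma sin_mul_one_sub_cos (k : nat) (phi : R) :
  (2 * INR k + 1) * phi = PI ->
  sin (INR k * phi) * (1 - cos phi) = cos (INR k * phi) * sin phi.
Proof.
  intros Hphi.
  assert (E : sin (INR k * phi + phi) = sin (INR k * phi)).
  { replace (INR k * phi + phi) with (PI - INR k * phi) by lra; apply sin_PI_x. }
  rewrite sin_plus in E; lra.
Qed.

Theorem proposition1 (gamma alpha : R) (j : nat) :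
  (1 <= j)%nat ->
  cos (gamma / 2) * sin (alpha / 2) = sin (PI / (2 * (2 * INR j + 1))) ->
  theta41j alpha gamma j = 2 * INR j * PI / (2 * INR j + 1).
Proof.
  intros Hj H.
  pose proof PI_RGT_0 as HPI.
  assert (HJ : 1 <= INR j) by (apply (le_INR 1); exact Hj).
  set (phi := PI / (2 * INR j + 1)).
  assert (Hphi : (2 * INR j + 1) * phi = PI) by (unfold phi; field; lra).
  assert (Hs : sin phi <> 0).
  { assert (0 < sin phi) by (apply sin_gt_0; nra); lra. }
  assert (Hw1 : qw (Q1 alpha gamma) = cos phi).
  { rewrite qw_Q1, H.
    replace phi with (2 * (PI / (2 * (2 * INR j + 1)))) by (unfold phi; field; lra).
    rewrite cos_2a_sin; ring. }
  assert (Hw : qw (qj alpha gamma j) = cos (INR j * phi)).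
  { unfold qj; rewrite (qw_qpow_qmul _ _ phi j (qnorm2_Q1 alpha gamma) Hw1 Hs).
    rewrite qvdot_Q1_Q4, Hw1.
    pose proof (sin_mul_one_sub_cos j phi Hphi) as Ht.
    transitivity (cos (INR j * phi) * qw (Q4 alpha gamma)
                  - sin (INR j * phi) * (1 - cos phi) / sin phi * (qw (Q4 alpha gamma) - 1));
      [field; exact Hs | rewrite Ht; field; exact Hs]. }
  unfold theta41j; rewrite Hw, acos_cos.
  - unfold phi; field; lra.
  - split; nra.
Qed.
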